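(* Let $\psi\colon\mathcal B\to\mathcal A$ be a quasi-isomorphism of DGAs (a DGA morphism inducing an isomorphism $\psi^*$ in cohomology). (1) Suppose $a,b_1,\dots,b_n\in\mathcal A$ are closed, $|a|$ is even and each $a\wedge b_i$ is exact, so that $\langle a;b_1,\dots,b_n\rangle$ is defined, and let $a',b_i'\in\mathcal B$ be closed elements with $[\psi(a')]=[a]$ and $[\psi(b_i')]=[b_i]$. Then $\langle a';b_1',\dots,b_n'\rangle$ is defined in $\mathcal B$ and $\psi^*(\langle a';b_1',\dots,b_n'\rangle)=\langle a;b_1,\dots,b_n\rangle$. (2) Conversely, if $\langle a';b_1',\dots,b_n'\rangle$ is a defined $a'$-Massey product in $\mathcal B$ and $a=\psi(a')$, $b_i=\psi(b_i')$, then $\psi^*(\langle a';b_1',\dots,b_n'\rangle)=\langle a;b_1,\dots,b_n\rangle$.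
   Context: A DGA is a graded-commutative differential graded algebra over $\mathbb R$; $|x|$ denotes degree and $\overline{x}=(-1)^{|x|}x$. Given closed $a,b_1,\dots,b_n$ with $|a|$ even and each $a\wedge b_i$ exact, the $a$-Massey product is $\langle a;b_1,\dots,b_n\rangle=\{[\sum_{i=1}^n\overline{\xi_1}\wedge\cdots\wedge\overline{\xi_{i-1}}\wedge b_i\wedge\xi_{i+1}\wedge\cdots\wedge\xi_n] : d\xi_i=a\wedge b_i\}$, a subset of cohomology. *)

From HB Require Import structures.
From mathcomp Require Import all_boot all_order all_algebra.
From mathcomp Require Import Rstruct.
Set Implicit Arguments. Unset Strict Implicit. Unset Printing Implicit Defensive.
Import Order.TTheory GRing.Theory Num.Theory.
Local Open Scope ring_scope.

Notation RR := Rdefinitions.R.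

Definition sgnz (p : int) : RR := (-1) ^+ `|p|%N.

(* A graded-commutative differential graded algebra over the reals,
   nonnegatively graded (A^n = 0 for n < 0).  The carrier is the total
   algebra  (+)_n A^n ; [homog D n] is the subspace A^n. *)
Record dga := DGA {
  dga_car :> algType RR;
  homog : int -> dga_car -> Prop;
  dd : dga_car -> dga_car;
  homog0 : forall n, homog n 0;
  homogD : forall n x y, homog n x -> homog n y -> homog n (x + y);
  homogZ : forall n (c : RR) x, homog n x -> homog n (c *: x);
  homog_neg : forall n x, n < 0 -> homog n x -> x = 0;
  homog_span : forall x : dga_car, exists s : seq (int * dga_car),
      (forall u, u \in s -> homog u.1 u.2) /\ x = \sum_(u <- s) u.2;
  homog_indep : forall (k : nat) (deg : 'I_k -> int) (f : 'I_k -> dga_car),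
      injective deg -> (forall i, homog (deg i) (f i)) ->
      \sum_(i < k) f i = 0 -> forall i, f i = 0;
  homog1 : homog 0 1;
  homogM : forall p q x y, homog p x -> homog q y -> homog (p + q) (x * y);
  gcomm : forall p q x y, homog p x -> homog q y ->
      x * y = sgnz (p * q) *: (y * x);
  dd_linear : linear dd;
  dd_homog : forall n x, homog n x -> homog (n + 1) (dd x);
  dd_dd : forall x, dd (dd x) = 0;
  dd_leibniz : forall p x y, homog p x ->
      dd (x * y) = dd x * y + sgnz p *: (x * dd y)
}.

Record dga_hom (B A : dga) (f : B -> A) : Prop := DGAHom {
  hom_linear : linear f;
  hom_mul : forall x y, f (x * y) = f x * f y;
  hom_one : f 1 = 1;
  hom_homog : forall n x, homog n x -> homog n (f x);
  hom_dd : forall x, f (dd x) = dd (f x)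
}.

Definition closed_in (D : dga) (n : int) (x : D) : Prop := homog n x /\ dd x = 0.
Definition exact_in (D : dga) (n : int) (x : D) : Prop :=
  homog n x /\ exists z : D, homog (n - 1) z /\ dd z = x.
Definition cohom (D : dga) (n : int) (x y : D) : Prop := exact_in n (x - y).

(* psi : B -> A is a quasi-isomorphism: a DGA morphism such that
   psi^* : H^n(B) -> H^n(A) is bijective for every n *)
Definition quasi_iso (B A : dga) (psi : B -> A) : Prop :=
  dga_hom psi /\
  forall n : int,
    (forall x : B, closed_in n x -> exact_in n (psi x) -> exact_in n x) /\
    (forall y : A, closed_in n y -> exists x : B, closed_in n x /\ cohom n (psi x) y).

Definition massey_defined (D : dga) (p : int) (n : nat) (q : 'I_n -> int)
    (a : D) (b : 'I_n -> D) : Prop :=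
  ~~ odd `|p|%N /\ closed_in p a /\ (forall i, closed_in (q i) (b i)) /\
  (forall i, exact_in (p + q i) (a * b i)).

Definition massey_deg (p : int) (n : nat) (q : 'I_n -> int) : int :=
  \sum_(j < n) (p + q j - 1) - p + 1.

Definition massey_value (D : dga) (p : int) (n : nat) (q : 'I_n -> int)
    (b xi : 'I_n -> D) : D :=
  \sum_(i < n)
    (\prod_(j < n | (j < i)%N) (sgnz (p + q j - 1) *: xi j)) * b i *
    (\prod_(j < n | (i < j)%N) xi j).

Definition massey_elem (D : dga) (p : int) (n : nat) (q : 'I_n -> int)
    (a : D) (b : 'I_n -> D) (z : D) : Prop :=
  closed_in (massey_deg p q) z /\
  exists xi : 'I_n -> D,
    (forall i, homog (p + q i - 1) (xi i) /\ dd (xi i) = a * b i) /\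
    cohom (massey_deg p q) z (massey_value p q b xi).

(* psi^*(S') = S for subsets of H^m given by cohomology-invariant predicates
   of representatives *)
Definition cohom_image_eq (B A : dga) (psi : B -> A) (m : int)
    (S' : B -> Prop) (S : A -> Prop) : Prop :=
  (forall z' : B, S' z' -> S (psi z')) /\
  (forall z : A, S z -> exists z' : B, S' z' /\ cohom m (psi z') z).

(* A Massey value  sum_i xibar_1 ... xibar_(i-1) b_i xi_(i+1) ... xi_n  built
   from a defining system (d xi_i = a b_i) is a cocycle, and its class does not
   change when (i) each xi_i is moved by a coboundary, or (ii) a and the b_i are
   replaced by cohomologous a + d alpha, b_i + d beta_i and xi_i by
   xi_i + alpha b_i' + a beta_i.  Both are proved by induction on the number of
   factors, carrying along the product xi_1 ... xi_k, whose differential is a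
   times the partial value.  A DGA morphism maps defining systems and Massey
   values to defining systems and Massey values; conversely, when psi is a
   quasi-isomorphism every defining system for psi a', psi b_i' is, up to
   coboundaries, the image of one for a', b_i'.  By (ii) the Massey product
   only depends on the classes of a and the b_i, so both statements follow. *)

From HB Require Import structures.
From mathcomp Require Import all_boot all_order all_algebra.
From mathcomp Require Import zify ssrAC Rstruct.
Set Implicit Arguments. Unset Strict Implicit. Unset Printing Implicit Defensive.
Import Order.TTheory GRing.Theory Num.Theory.
Local Open Scope ring_scope.

Lemma odd_abszD (x y : int) : odd `|x + y| = odd `|x| (+) odd `|y|.
Proof.
have := modn2 `|x + y|; have := modn2 `|x|; have := modn2 `|y|.
by case: (odd _); case: (odd _); case: (odd _) => /=; lia.
Qed.

Lemma sgnzE x : sgnz x = (-1 : RR) ^+ odd `|x|.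
Proof. by rewrite /sgnz signr_odd. Qed.

Lemma sgnz0 : sgnz 0 = 1. Proof. by rewrite /sgnz expr0. Qed.

Lemma sgnzD x y : sgnz (x + y) = sgnz x * sgnz y.
Proof. by rewrite !sgnzE odd_abszD signr_addb. Qed.

Lemma sgnzN x : sgnz (- x) = sgnz x.
Proof. by rewrite /sgnz abszN. Qed.

Lemma sgnz_sqr x : sgnz x * sgnz x = 1.
Proof. by rewrite sgnzE -signr_addb addbb. Qed.

Lemma sgnz_even x : ~~ odd `|x| -> sgnz x = 1.
Proof. by move=> h; rewrite sgnzE (negbTE h). Qed.

Lemma sgnzM_even x y : ~~ odd `|y| -> sgnz (x * y) = 1.
Proof. by move=> h; rewrite sgnzE abszM oddM (negbTE h) andbF. Qed.

Lemma sgnzM_odd x y : odd `|y| -> sgnz (x * y) = sgnz x.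
Proof. by move=> h; rewrite !sgnzE abszM oddM h andbT. Qed.

Lemma sgnzB1 x : sgnz (x - 1) = - sgnz x.
Proof. by rewrite sgnzD sgnzN /sgnz expr1 mulrN1. Qed.

Lemma sgnzB_even x p : ~~ odd `|p| -> sgnz (x - p) = sgnz x.
Proof. by move=> h; rewrite sgnzD sgnzN (sgnz_even h) mulr1. Qed.

Lemma sgnzD1B_even x p : ~~ odd `|p| -> sgnz (x + 1 - p) = - sgnz x.
Proof. by move=> h; rewrite (sgnzB_even _ h) sgnzD /sgnz expr1 mulrN1. Qed.

Lemma odd_even_sub1 p : ~~ odd `|p| -> odd `|p - 1|.
Proof. by move=> h; rewrite odd_abszD abszN /= (negbTE h). Qed.

Section LinearFun.
Variables (R : pzRingType) (U V : lmodType R) (f : U -> V).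
Hypothesis f_lin : linear f.

Let fL : {linear U -> V} := HB.pack f (GRing.isLinear.Build _ _ _ _ f f_lin).

Lemma lin0 : f 0 = 0. Proof. exact: (linear0 fL). Qed.
Lemma linD x y : f (x + y) = f x + f y. Proof. exact: (linearD fL). Qed.
Lemma linN x : f (- x) = - f x. Proof. exact: (linearN fL). Qed.
Lemma linB x y : f (x - y) = f x - f y. Proof. exact: (linearB fL). Qed.
Lemma linZ c x : f (c *: x) = c *: f x. Proof. exact: (linearZZ fL). Qed.
Lemma lin_sum I (r : seq I) (P : pred I) (F : I -> U) :
  f (\sum_(i <- r | P i) F i) = \sum_(i <- r | P i) f (F i).
Proof. exact: (linear_sum fL). Qed.

End LinearFun.

Section DGABasics.
Variable D : dga.
Implicit Types x y z : D.

Lemma dd0 : dd (0 : D) = 0. Proof. exact: (@lin0 _ D D _ (@dd_linear D)). Qed.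
Lemma ddD x y : dd (x + y) = dd x + dd y. Proof. exact: (@linD _ D D _ (@dd_linear D)). Qed.
Lemma ddN x : dd (- x) = - dd x. Proof. exact: (@linN _ D D _ (@dd_linear D)). Qed.
Lemma ddB x y : dd (x - y) = dd x - dd y. Proof. exact: (@linB _ D D _ (@dd_linear D)). Qed.
Lemma ddZ c x : dd (c *: x) = c *: dd x. Proof. exact: (@linZ _ D D _ (@dd_linear D)). Qed.

Lemma dd1 : dd (1 : D) = 0.
Proof.
have := dd_leibniz 1 (homog1 D); rewrite !mul1r mulr1 sgnz0 scale1r => h.
by apply: (addrI (dd (1 : D))); rewrite addr0 -h.
Qed.

Lemma homog_eq m n x : m = n -> homog m x -> homog n x.
Proof. by move=> ->. Qed.

Lemma homogN n x : homog n x -> homog n (- x).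
Proof. by rewrite -scaleN1r; apply: homogZ. Qed.

Lemma homogB n x y : homog n x -> homog n y -> homog n (x - y).
Proof. by move=> hx /homogN; apply: homogD. Qed.

Lemma homog_dd n x : homog (n - 1) x -> homog n (dd x).
Proof. by move/dd_homog; rewrite subrK. Qed.

Lemma exact0 n : exact_in n (0 : D).
Proof. by split; [exact: homog0 | exists 0; rewrite dd0; split => //; exact: homog0]. Qed.

Lemma exact_dd n x : homog (n - 1) x -> exact_in n (dd x).
Proof. by move=> h; split; [exact: homog_dd | exists x]. Qed.

Lemma exactD n x y : exact_in n x -> exact_in n y -> exact_in n (x + y).
Proof.
move=> [hx [z [hz <-]]] [hy [w [hw <-]]]; rewrite -ddD.
by apply: exact_dd; apply: homogD.
Qed.

Lemma exactN n x : exact_in n x -> exact_in n (- x).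
Proof. by move=> [hx [z [hz <-]]]; rewrite -ddN; apply: exact_dd; apply: homogN. Qed.

Lemma cohom_sym n x y : cohom n x y -> cohom n y x.
Proof. by move=> h; rewrite /cohom -opprB; apply: exactN. Qed.

Lemma cohom_trans n x y z : cohom n x y -> cohom n y z -> cohom n x z.
Proof. by rewrite /cohom => hxy /(exactD hxy); rewrite subrKA. Qed.

Lemma closed_mul p q x y : closed_in p x -> closed_in q y -> closed_in (p + q) (x * y).
Proof.
move=> [hx dx] [hy dy]; split; first exact: homogM.
by rewrite (dd_leibniz _ hx) dx dy mul0r mulr0 scaler0 addr0.
Qed.

Lemma homog_even_comm p a m x : ~~ odd `|p| -> homog p a -> homog m x -> x * a = a * x.
Proof. by move=> hp ha hx; rewrite (gcomm hx ha) (sgnzM_even _ hp) scale1r. Qed.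

Lemma homog_odd_sqr m x : odd `|m| -> homog m x -> x * x = 0.
Proof.
move=> hm hx; have := gcomm hx hx; rewrite sgnzM_odd // sgnzE hm expr1 scaleN1r.
move=> /eqP; rewrite -addr_eq0 -mulr2n -scaler_nat scaler_eq0 pnatr_eq0 /=.
by move/eqP.
Qed.

(* With [x' = x + d al], [y' = y + d be], the difference is [d (al y' + x be)]. *)
Lemma cohom_mul p k x x' y y' : ~~ odd `|p| ->
  closed_in p x -> closed_in k y' -> cohom p x' x -> cohom k y' y ->
  cohom (p + k) (x' * y') (x * y).
Proof.
move=> hp [hx dx] [hy dy] [_ [al [hal dal]]] [_ [be [hbe dbe]]].
rewrite /cohom; have -> : x' * y' - x * y = dd (al * y' + x * be).
  rewrite ddD (dd_leibniz _ hal) (dd_leibniz _ hx) dy dx mulr0 scaler0 addr0 mul0r add0r.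
  by rewrite (sgnz_even hp) scale1r dal dbe mulrBl mulrBr addrA subrK.
apply: exact_dd; apply: homogD.
  by apply: (homog_eq _ (homogM hal hy)); lia.
by apply: (homog_eq _ (homogM hx hbe)); lia.
Qed.

Lemma defining_shift p m a a' b b' x al be : ~~ odd `|p| ->
  homog p a -> dd a = 0 -> homog (p - 1) al -> a' = a + dd al ->
  homog m b' -> dd b' = 0 -> homog (m - 1) be -> b' = b + dd be ->
  homog (p + m - 1) x -> dd x = a * b ->
  homog (p + m - 1) (x + al * b' + a * be) /\ dd (x + al * b' + a * be) = a' * b'.
Proof.
move=> hp ha hda hal ea' hb' hdb' hbe eb' hx hdx; split.
  apply: homogD; first apply: homogD => //.
    by apply: (homog_eq _ (homogM hal hb')); lia.
  by apply: (homog_eq _ (homogM ha hbe)); lia.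
rewrite !ddD hdx (dd_leibniz _ hal) (dd_leibniz _ ha) hdb' hda mulr0 scaler0.
rewrite addr0 mul0r add0r (sgnz_even hp) scale1r ea' eb' mulrDl [a * (_ + _)]mulrDr -eb'.
by rewrite addrAC -addrA.
Qed.

End DGABasics.

(* Defining systems indexed by [nat] instead of ['I_n], so that the Massey
   value can be built up one index at a time. *)
Section PartialValue.
Variable D : dga.
Variables (p : int) (q : nat -> int).
Implicit Types b xi : nat -> D.

Definition xi_deg j := p + q j - 1.
Definition xi_degs k := \sum_(j < k) xi_deg j.
Definition xi_prod (xi : nat -> D) k := \prod_(j < k) xi j.
Definition partial_value (b xi : nat -> D) k :=
  \sum_(i < k) (\prod_(j < i) (sgnz (xi_deg j) *: xi j)) * b i *
    (\prod_(i.+1 <= j < k) xi j).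

Lemma xi_degs0 : xi_degs 0 = 0. Proof. by rewrite /xi_degs big_ord0. Qed.
Lemma xi_degsS k : xi_degs k.+1 = xi_degs k + xi_deg k.
Proof. by rewrite /xi_degs big_ord_recr. Qed.

Lemma xi_prod0 xi : xi_prod xi 0 = 1. Proof. by rewrite /xi_prod big_ord0. Qed.
Lemma xi_prodS xi k : xi_prod xi k.+1 = xi_prod xi k * xi k.
Proof. by rewrite /xi_prod big_ord_recr. Qed.

Lemma prod_bar xi k :
  \prod_(j < k) (sgnz (xi_deg j) *: xi j) = sgnz (xi_degs k) *: xi_prod xi k.
Proof.
have prod_sgnz j : \prod_(i < j) sgnz (xi_deg i) = sgnz (xi_degs j).
  elim: j => [|j IH]; first by rewrite big_ord0 xi_degs0 sgnz0.
  by rewrite big_ord_recr /= IH xi_degsS (sgnzD (xi_degs j)).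
by rewrite scaler_prod prod_sgnz.
Qed.

Lemma partial_value0 b xi : partial_value b xi 0 = 0.
Proof. by rewrite /partial_value big_ord0. Qed.

Lemma partial_valueS b xi k : partial_value b xi k.+1 =
  partial_value b xi k * xi k + sgnz (xi_degs k) *: (xi_prod xi k * b k).
Proof.
rewrite /partial_value big_ord_recr /= big_geq // mulr1 prod_bar -scalerAl.
congr (_ + _); rewrite mulr_suml; apply: eq_bigr => i _.
by rewrite big_nat_recr //= !mulrA.
Qed.

Lemma eq_partial_value b xi b' xi' k :
  (forall j, (j < k)%N -> b j = b' j /\ xi j = xi' j) ->
  partial_value b xi k = partial_value b' xi' k.
Proof.
move=> eq_bxi; rewrite /partial_value; apply: eq_bigr => i _.
have [-> _] := eq_bxi i (ltn_ord i).
congr (_ * _ * _).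
  by apply: eq_bigr => j _; rewrite (eq_bxi j _).2 // (ltn_trans _ (ltn_ord i)).
rewrite !big_nat; apply: eq_bigr => j /andP [_ hj]; exact: (eq_bxi j hj).2.
Qed.

Section Cocycle.
Variables (a : D) (b xi : nat -> D).
Hypotheses (hb : forall j, homog (q j) (b j)) (hxi : forall j, homog (xi_deg j) (xi j)).

Lemma xi_prod_homog k : homog (xi_degs k) (xi_prod xi k).
Proof.
elim: k => [|k IH]; first by rewrite xi_prod0 xi_degs0; exact: homog1.
by rewrite xi_prodS xi_degsS; apply: homogM.
Qed.

Lemma partial_value_homog k : homog (xi_degs k + 1 - p) (partial_value b xi k).
Proof.
elim: k => [|k IH]; first by rewrite partial_value0; exact: homog0.
rewrite partial_valueS xi_degsS; apply: homogD.
  by apply: (homog_eq _ (homogM IH (hxi k))); rewrite /xi_deg; lia.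
apply/homogZ/(homog_eq _ (homogM (xi_prod_homog k) (hb k))); rewrite /xi_deg; lia.
Qed.

Hypotheses (hp : ~~ odd `|p|) (ha : homog p a).
Hypotheses (hdb : forall j, dd (b j) = 0) (hdxi : forall j, dd (xi j) = a * b j).

Lemma dd_xi_prod k : dd (xi_prod xi k) = a * partial_value b xi k.
Proof.
elim: k => [|k IH]; first by rewrite xi_prod0 partial_value0 dd1 mulr0.
rewrite xi_prodS partial_valueS (dd_leibniz _ (xi_prod_homog k)) IH hdxi mulrDr.
by rewrite -scalerAr !mulrA (homog_even_comm hp ha (xi_prod_homog k)).
Qed.

Lemma dd_partial_value k : dd (partial_value b xi k) = 0.
Proof.
elim: k => [|k IH]; first by rewrite partial_value0 dd0.
have hP := xi_prod_homog k; have hV := partial_value_homog k.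
rewrite partial_valueS ddD ddZ (dd_leibniz _ hV) (dd_leibniz _ hP) IH dd_xi_prod hdxi.
rewrite hdb mul0r add0r mulr0 scaler0 addr0 (sgnzD1B_even _ hp) mulrA.
by rewrite (homog_even_comm hp ha hV) -mulrA scaleNr addNr.
Qed.
End Cocycle.


Section Perturb.
Variables (a : D) (b xi eta : nat -> D).
Hypotheses (hb : forall j, homog (q j) (b j)) (hxi : forall j, homog (xi_deg j) (xi j)).
Hypotheses (hp : ~~ odd `|p|) (ha : homog p a).
Hypotheses (hdb : forall j, dd (b j) = 0) (hdxi : forall j, dd (xi j) = a * b j).
Hypothesis heta : forall j, homog (xi_deg j - 1) (eta j).

Let xi' j := xi j + dd (eta j).
Let hxi' j : homog (xi_deg j) (xi' j).
Proof. by apply: homogD => //; apply: homog_dd. Qed.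
Let hdxi' j : dd (xi' j) = a * b j.
Proof. by rewrite /xi' ddD dd_dd addr0. Qed.

Section Step.
Variables (k : nat) (W R : D).
Let P := xi_prod xi k.
Let V := partial_value b xi k.
Let s := sgnz (xi_degs k).
Hypotheses (hW : homog (xi_degs k - p) W) (hR : homog (xi_degs k - 1) R).
Hypothesis eV : partial_value b xi' k = V + dd W.
Hypothesis eP : xi_prod xi' k = P + (a * W + dd R).

Let hP : homog (xi_degs k) P := xi_prod_homog hxi k.
Let hV : homog (xi_degs k + 1 - p) V := partial_value_homog hb hxi k.

Lemma partial_value_perturb_step :
  partial_value b xi' k.+1 - partial_value b xi k.+1 =
  dd (W * xi' k - s *: (V * eta k) + s *: (R * b k)).
Proof.
have hWa : W * a = a * W := homog_even_comm hp ha hW.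
rewrite !partial_valueS eV eP -/P -/V -/s ddD ddB !ddZ (dd_leibniz _ hW).
rewrite (dd_leibniz _ hV) (dd_leibniz _ hR) hdxi' hdb (dd_partial_value hb hxi hp ha hdb hdxi).
rewrite mul0r add0r mulr0 scaler0 addr0 (sgnzB_even _ hp) (sgnzD1B_even _ hp) -/s.
rewrite scalerA mulrN sgnz_sqr scaleN1r opprK mulrA hWa /xi' !mulrDr !mulrDl !scalerDr.
by rewrite opprD !addrA (ACl ((1*8)*(5*9)*2*4*6*3*7)) /= !subrr !add0r.
Qed.

Lemma xi_prod_perturb_step :
  xi_prod xi' k.+1 - xi_prod xi k.+1 =
  a * (W * xi' k - s *: (V * eta k) + s *: (R * b k)) + dd (s *: (P * eta k) + R * xi' k).
Proof.
have hRa : R * a = a * R := homog_even_comm hp ha hR.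
rewrite !xi_prodS eP -/P ddD ddZ (dd_leibniz _ hP) (dd_leibniz _ hR).
rewrite (dd_xi_prod hxi hp ha hdxi) -/V hdxi' sgnzB1 -/s scalerDr scalerA sgnz_sqr scale1r.
rewrite /xi' !mulrDr !mulrDl mulrN -!scalerAr !mulrA hRa scaleNr.
rewrite !addrA [LHS](ACl ((1*7)*2*5*4*3*6)) [RHS](ACl ((3*5)*(4*9)*1*2*6*7*8)) /=.
by rewrite !subrr addNr !add0r.
Qed.

End Step.

(* The identities for [xi_prod] are the invariants that carry the induction. *)
Lemma partial_value_perturb k : exists W R,
  homog (xi_degs k - p) W /\ homog (xi_degs k - 1) R /\
  partial_value b xi' k - partial_value b xi k = dd W /\
  xi_prod xi' k - xi_prod xi k = a * W + dd R.
Proof.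
elim: k => [|k [W [R [hW [hR [eV eP]]]]]].
  exists 0, 0; rewrite !partial_value0 !xi_prod0 dd0 mulr0 !subrr addr0.
  by split; [apply: homog0 | split; [apply: homog0 |]].
have hP := xi_prod_homog hxi k; have hV := partial_value_homog hb hxi k.
move/(canRL (subrK _)): eV; rewrite addrC => eV.
move/(canRL (subrK _)): eP; rewrite addrC => eP.
set s := sgnz (xi_degs k).
exists (W * xi' k - s *: (partial_value b xi k * eta k) + s *: (R * b k)).
exists (s *: (xi_prod xi k * eta k) + R * xi' k).
rewrite xi_degsS (partial_value_perturb_step hW hR eV eP) (xi_prod_perturb_step hR eP).
split.
  apply: homogD; last by apply/homogZ/(homog_eq _ (homogM hR (hb k))); rewrite /xi_deg; lia.
  apply: homogB; first by apply: (homog_eq _ (homogM hW (hxi' k))); lia.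
  by apply/homogZ/(homog_eq _ (homogM hV (heta k))); rewrite /xi_deg; lia.
split => //.
apply: homogD; last by apply: (homog_eq _ (homogM hR (hxi' k))); lia.
by apply/homogZ/(homog_eq _ (homogM hP (heta k))); rewrite /xi_deg; lia.
Qed.

End Perturb.

Section ChangeRepresentatives.
Variables (a alpha a' : D) (b xi beta b' xi' : nat -> D).
Hypotheses (hb : forall j, homog (q j) (b j)) (hxi : forall j, homog (xi_deg j) (xi j)).
Hypotheses (hp : ~~ odd `|p|) (ha : homog p a) (hda : dd a = 0).
Hypotheses (hdb : forall j, dd (b j) = 0) (hdxi : forall j, dd (xi j) = a * b j).
Hypotheses (halpha : homog (p - 1) alpha) (hbeta : forall j, homog (q j - 1) (beta j)).
Hypotheses (ea' : a' = a + dd alpha) (eb' : forall j, b' j = b j + dd (beta j)).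
Hypothesis exi' : forall j, xi' j = xi j + alpha * b' j + a * beta j.

Let ha' : homog p a'.
Proof. by rewrite ea'; apply: homogD => //; apply: homog_dd. Qed.
Let hb' j : homog (q j) (b' j).
Proof. by rewrite eb'; apply: homogD => //; apply: homog_dd. Qed.
Let hdb' j : dd (b' j) = 0.
Proof. by rewrite eb' ddD hdb dd_dd addr0. Qed.
Let hdefxi' j : homog (xi_deg j) (xi' j) /\ dd (xi' j) = a' * b' j.
Proof.
rewrite exi'.
exact: defining_shift hp ha hda halpha ea' (hb' j) (hdb' j) (hbeta j) (eb' j) (hxi j) (hdxi j).
Qed.
Let hxi' j := (hdefxi' j).1.
Let hdxi' j := (hdefxi' j).2.

Section Step.
Variables (k : nat) (W R : D).
Let P := xi_prod xi k.
Let V := partial_value b xi k.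
Let s := sgnz (xi_degs k).
Hypotheses (hW : homog (xi_degs k - p) W) (hR : homog (xi_degs k - 1) R).
Hypothesis eV : partial_value b' xi' k = V + dd W.
Hypothesis eP : xi_prod xi' k = P + (a' * W + alpha * V + dd R).

Let hP : homog (xi_degs k) P := xi_prod_homog hxi k.
Let hV : homog (xi_degs k + 1 - p) V := partial_value_homog hb hxi k.
Let hpo : odd `|p - 1| := odd_even_sub1 hp.
Let hVa : V * a = a * V := homog_even_comm hp ha hV.
Let hPa : P * a = a * P := homog_even_comm hp ha hP.
Let hVal : V * alpha = - s *: (alpha * V).
Proof. by rewrite (gcomm hV halpha) (sgnzM_odd _ hpo) (sgnzD1B_even _ hp). Qed.
Let hPal : P * alpha = s *: (alpha * P).
Proof. by rewrite (gcomm hP halpha) (sgnzM_odd _ hpo). Qed.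

Lemma partial_value_cohom_step :
  partial_value b' xi' k.+1 - partial_value b xi k.+1 =
  dd (W * xi' k + P * beta k + s *: (R * b' k)).
Proof.
have hWa : W * a' = a' * W := homog_even_comm hp ha' hW.
rewrite !partial_valueS eV eP -/P -/V -/s.
rewrite ddD ddD ddZ (dd_leibniz _ hW) (dd_leibniz _ hP) (dd_leibniz _ hR).
rewrite hdxi' hdb' (dd_xi_prod hxi hp ha hdxi) mulr0 scaler0 addr0 (sgnzB_even _ hp).
rewrite -/s -/V mulrA hWa.
have hL1 : V * xi' k = V * xi k + (- s) *: (alpha * V * b' k) + a * V * beta k.
  by rewrite exi' !mulrDr !mulrA hVal hVa -scalerAl.
have hL2 : (P + (a' * W + alpha * V + dd R)) * b' k = P * b k + P * dd (beta k) +
    a' * W * b' k + alpha * V * b' k + dd R * b' k.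
  by rewrite mulrDl [in P * b' k]eb' mulrDr !mulrDl !addrA.
rewrite mulrDl hL1 hL2 !scalerDr opprD !addrA.
by rewrite (ACl ((((1*10)*(5*11))*(2*8))*4*7*3*6*9)) /= !subrr scaleNr addNr !add0r.
Qed.

Lemma xi_prod_cohom_step :
  xi_prod xi' k.+1 - xi_prod xi k.+1 =
  a' * (W * xi' k + P * beta k + s *: (R * b' k)) + alpha * partial_value b xi k.+1 +
  dd (R * xi' k - alpha * (P * beta k)).
Proof.
have hRa : R * a' = a' * R := homog_even_comm hp ha' hR.
have haa : alpha * alpha = 0 := homog_odd_sqr hpo halpha.
have hQ1 : P * xi' k = P * xi k + s *: (alpha * P * b k) + s *: (alpha * P * dd (beta k))
    + a' * P * beta k - dd alpha * P * beta k.
  rewrite exi' eb' ea' !mulrDr !mulrA hPal hPa -!scalerAl !mulrDl !addrA.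
  by rewrite addrK.
have hQ2 : alpha * V * xi' k = alpha * V * xi k + alpha * a * V * beta k.
  rewrite exi' !mulrDr !mulrA -[alpha * V * alpha]mulrA hVal -scalerAr mulrA haa.
  by rewrite mul0r scaler0 mul0r addr0 -[alpha * V * a]mulrA hVa mulrA.
rewrite !xi_prodS partial_valueS eP -/P -/V -/s mulrDl !mulrDl hQ1 hQ2.
rewrite ddB (dd_leibniz _ hR) (dd_leibniz _ halpha) (dd_leibniz _ hP) hdxi'.
rewrite (dd_xi_prod hxi hp ha hdxi) -/V sgnzB1 -/s (sgnzB1 p) (sgnz_even hp).
rewrite !mulrDr !scalerAr scaleN1r !scaleNr !mulrA hRa !opprD !opprK !addrA mulrN.
rewrite [LHS](ACl ((1*10)*2*3*4*5*6*7*8*9)) [RHS](ACl ((3*7)*5*10*2*8*1*4*9*6)) /=.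
by rewrite !subrr !add0r.
Qed.

End Step.

Lemma partial_value_cohom k : exists W R,
  homog (xi_degs k - p) W /\ homog (xi_degs k - 1) R /\
  partial_value b' xi' k - partial_value b xi k = dd W /\
  xi_prod xi' k - xi_prod xi k = a' * W + alpha * partial_value b xi k + dd R.
Proof.
elim: k => [|k [W [R [hW [hR [eV eP]]]]]].
  exists 0, 0; rewrite !partial_value0 !xi_prod0 dd0 !mulr0 !subrr !addr0.
  by split; [apply: homog0 | split; [apply: homog0 |]].
have hP := xi_prod_homog hxi k; have hV := partial_value_homog hb hxi k.
move/(canRL (subrK _)): eV; rewrite addrC => eV.
move/(canRL (subrK _)): eP; rewrite addrC => eP.
exists (W * xi' k + xi_prod xi k * beta k + sgnz (xi_degs k) *: (R * b' k)).
exists (R * xi' k - alpha * (xi_prod xi k * beta k)).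
rewrite xi_degsS (partial_value_cohom_step hW hR eV eP) (xi_prod_cohom_step hR eP).
split.
  apply: homogD; last by apply/homogZ/(homog_eq _ (homogM hR (hb' k))); rewrite /xi_deg; lia.
  apply: homogD; first by apply: (homog_eq _ (homogM hW (hxi' k))); lia.
  by apply: (homog_eq _ (homogM hP (hbeta k))); rewrite /xi_deg; lia.
split => //.
apply: homogB; first by apply: (homog_eq _ (homogM hR (hxi' k))); lia.
by apply: (homog_eq _ (homogM halpha (homogM hP (hbeta k)))); rewrite /xi_deg; lia.
Qed.

End ChangeRepresentatives.
End PartialValue.

(* Families over ['I_n] are extended by a default value to families over
   [nat]; with the default [0] all the hypotheses of the previous sections
   hold trivially outside ['I_n]. *)
Section NatExt.
Variables (T : Type) (n : nat) (d : T) (f : 'I_n -> T).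

Definition nat_ext (j : nat) : T := oapp f d (insub j).

Lemma nat_extE (i : 'I_n) : nat_ext i = f i.
Proof. by rewrite /nat_ext valK. Qed.

Lemma nat_ext_out j : (n <= j)%N -> nat_ext j = d.
Proof. by move=> hj; rewrite /nat_ext insubN // -leqNgt. Qed.

End NatExt.

Lemma nat_ext_ind n (P : nat -> Prop) :
  (forall i : 'I_n, P i) -> (forall j, (n <= j)%N -> P j) -> forall j, P j.
Proof.
by move=> Pin Pout j; case: (ltnP j n) => [hj|]; [exact: (Pin (Ordinal hj)) | exact: Pout].
Qed.

Definition defining_system (D : dga) p n (q : 'I_n -> int) (a : D) (b xi : 'I_n -> D) :=
  forall i, homog (p + q i - 1) (xi i) /\ dd (xi i) = a * b i.

Section MasseyValue.
Variables (D : dga) (p : int) (n : nat) (q : 'I_n -> int).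
Implicit Types b xi : 'I_n -> D.

Lemma massey_valueE b xi :
  massey_value p q b xi = partial_value p (nat_ext 0 q) (nat_ext 0 b) (nat_ext 0 xi) n.
Proof.
rewrite /massey_value /partial_value; apply: eq_bigr => i _; rewrite nat_extE.
congr (_ * _ * _).
  rewrite (big_ord_narrow (ltnW (ltn_ord i))); apply: eq_bigr => j _.
  by rewrite /xi_deg -(nat_extE 0 q (widen_ord _ j)) -(nat_extE 0 xi (widen_ord _ j)).
by rewrite big_geq_mkord; apply: eq_bigr => j _; rewrite nat_extE.
Qed.

Lemma massey_degE : massey_deg p q = xi_degs p (nat_ext 0 q) n - p + 1.
Proof.
rewrite /massey_deg /xi_degs; congr (_ - _ + _).
by apply: eq_bigr => i _; rewrite /xi_deg nat_extE.
Qed.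

Lemma nat_ext_closed b : (forall i, closed_in (q i) (b i)) ->
  forall j, homog (nat_ext 0 q j) (nat_ext 0 b j) /\ dd (nat_ext 0 b j) = 0.
Proof.
move=> hb j; elim/(@nat_ext_ind n): j => [i|j hj].
  by rewrite !nat_extE; exact: hb.
by rewrite !nat_ext_out // dd0; split => //; exact: homog0.
Qed.

Lemma nat_ext_defining a b xi : defining_system p q a b xi ->
  forall j, homog (xi_deg p (nat_ext 0 q) j) (nat_ext 0 xi j) /\
    dd (nat_ext 0 xi j) = a * nat_ext 0 b j.
Proof.
move=> hxi j; elim/(@nat_ext_ind n): j => [i|j hj].
  by rewrite /xi_deg !nat_extE; exact: hxi.
by rewrite !nat_ext_out // dd0 mulr0; split => //; exact: homog0.
Qed.

Section Closed.
Variables (a : D) (b xi : 'I_n -> D).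
Hypotheses (hp : ~~ odd `|p|) (ha : closed_in p a) (hb : forall i, closed_in (q i) (b i)).
Hypothesis hxi : defining_system p q a b xi.

Let hbn j := (nat_ext_closed hb j).1.
Let hdbn j := (nat_ext_closed hb j).2.
Let hxin j := (nat_ext_defining hxi j).1.
Let hdxin j := (nat_ext_defining hxi j).2.

Lemma massey_value_closed : closed_in (massey_deg p q) (massey_value p q b xi).
Proof.
rewrite massey_valueE massey_degE; split.
  by apply: (homog_eq _ (partial_value_homog hbn hxin n)); lia.
exact: dd_partial_value hbn hxin hp ha.1 hdbn hdxin n.
Qed.

Lemma massey_value_perturb (eta : 'I_n -> D) :
  (forall i, homog (p + q i - 1 - 1) (eta i)) ->
  cohom (massey_deg p q) (massey_value p q b (fun i => xi i + dd (eta i)))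
    (massey_value p q b xi).
Proof.
move=> heta; have hetan j : homog (xi_deg p (nat_ext 0 q) j - 1) (nat_ext 0 eta j).
  elim/(@nat_ext_ind n): j => [i|j hj]; first by rewrite /xi_deg !nat_extE.
  by rewrite !nat_ext_out //; exact: homog0.
have [W [_ [hW [_ [eV _]]]]] := partial_value_perturb hbn hxin hp ha.1 hdbn hdxin hetan n.
rewrite /cohom !massey_valueE massey_degE.
rewrite (@eq_partial_value _ _ _ _ _ (nat_ext 0 b)
  (fun j => nat_ext 0 xi j + dd (nat_ext 0 eta j))).
  by rewrite eV; apply: exact_dd; apply: (homog_eq _ hW); lia.
by move=> j hj; rewrite -[j]/(nat_of_ord (Ordinal hj)) !nat_extE.
Qed.

Lemma massey_value_cohom (a' al : D) (b' be xi' : 'I_n -> D) :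
  homog (p - 1) al -> a' = a + dd al ->
  (forall i, homog (q i - 1) (be i)) -> (forall i, b' i = b i + dd (be i)) ->
  (forall i, xi' i = xi i + al * b' i + a * be i) ->
  defining_system p q a' b' xi' /\
  cohom (massey_deg p q) (massey_value p q b' xi') (massey_value p q b xi).
Proof.
move=> hal ea' hbe eb' exi'.
have [ha0 hda] := ha; split.
  move=> i; have [hbi hdbi] := hb i; rewrite exi'.
  have hdb'i : dd (b' i) = 0 by rewrite eb' ddD hdbi dd_dd addr0.
  have hb'i : homog (q i) (b' i) by rewrite eb'; apply/homogD/homog_dd/hbe.
  exact: defining_shift hp ha0 hda hal ea' hb'i hdb'i (hbe i) (eb' i) (hxi i).1 (hxi i).2.
have hben j : homog (nat_ext 0 q j - 1) (nat_ext 0 be j).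
  elim/(@nat_ext_ind n): j => [i|j hj]; first by rewrite !nat_extE.
  by rewrite !nat_ext_out //; exact: homog0.
have eb'n j : nat_ext 0 b' j = nat_ext 0 b j + dd (nat_ext 0 be j).
  elim/(@nat_ext_ind n): j => [i|j hj]; first by rewrite !nat_extE.
  by rewrite !nat_ext_out // dd0 addr0.
have exi'n j : nat_ext 0 xi' j =
    nat_ext 0 xi j + al * nat_ext 0 b' j + a * nat_ext 0 be j.
  elim/(@nat_ext_ind n): j => [i|j hj]; first by rewrite !nat_extE.
  by rewrite !nat_ext_out // !mulr0 !addr0.
have [W [_ [hW [_ [eV _]]]]] := partial_value_cohom hbn hxin hp ha.1 ha.2 hdbn hdxin
  hal hben ea' eb'n exi'n n.
rewrite /cohom !massey_valueE massey_degE eV.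
by apply: exact_dd; apply: (homog_eq _ hW); lia.
Qed.

End Closed.

Lemma massey_elem_cohom (a a' : D) (b b' : 'I_n -> D) z : ~~ odd `|p| ->
  closed_in p a -> cohom p a' a ->
  (forall i, closed_in (q i) (b i)) -> (forall i, cohom (q i) (b' i) (b i)) ->
  massey_elem p q a b z -> massey_elem p q a' b' z.
Proof.
move=> hp ha [_ [al [hal eal]]] hb hbb [hz [xi [hxi hcz]]].
have /fin_all_exists [be hbe] : forall i, exists be, homog (q i - 1) be /\ dd be = b' i - b i.
  by move=> i; case: (hbb i).
have ea' : a' = a + dd al by rewrite eal addrC subrK.
have eb' i : b' i = b i + dd (be i) by rewrite (hbe i).2 addrC subrK.
have [hxi' hc] := massey_value_cohom hp ha hb hxi hal ea' (fun i => (hbe i).1) eb'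
  (xi' := fun i => xi i + al * b' i + a * be i) (fun i => erefl).
split => //; exists (fun i => xi i + al * b' i + a * be i); split => //.
exact: cohom_trans hcz (cohom_sym hc).
Qed.

End MasseyValue.

Lemma eq_massey_value (D : dga) p n (q : 'I_n -> int) (b xi xi' : 'I_n -> D) :
  (forall i, xi i = xi' i) -> massey_value p q b xi = massey_value p q b xi'.
Proof.
move=> exi; rewrite /massey_value; apply: eq_bigr => i _.
by congr (_ * _ * _); apply: eq_bigr => j _; rewrite exi.
Qed.

Section Morphism.
Variables (B A : dga) (psi : B -> A).
Hypothesis hpsi : dga_hom psi.

Lemma hom_massey_value p n (q : 'I_n -> int) (b xi : 'I_n -> B) :
  psi (massey_value p q b xi) =
  massey_value p q (fun i => psi (b i)) (fun i => psi (xi i)).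
Proof.
have psi_mul := hom_mul hpsi; have psi_prod := big_morph psi psi_mul (hom_one hpsi).
rewrite /massey_value (lin_sum (hom_linear hpsi)); apply: eq_bigr => i _.
rewrite !psi_mul !psi_prod; congr (_ * _ * _); apply: eq_bigr => j _.
exact: (linZ (hom_linear hpsi)).
Qed.

Lemma hom_closed m x : closed_in m x -> closed_in m (psi x).
Proof.
move=> [hx dx]; split; first exact: (hom_homog hpsi).
by rewrite -(hom_dd hpsi) dx (lin0 (hom_linear hpsi)).
Qed.

Lemma hom_cohom m x y : cohom m x y -> cohom m (psi x) (psi y).
Proof.
move=> [hxy [z [hz dz]]]; rewrite /cohom -(linB (hom_linear hpsi)).
split; first exact: (hom_homog hpsi).
by exists (psi z); rewrite -(hom_dd hpsi) dz; split => //; exact: (hom_homog hpsi).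
Qed.

Lemma massey_elem_hom p n (q : 'I_n -> int) (a : B) (b : 'I_n -> B) z :
  massey_elem p q a b z ->
  massey_elem p q (psi a) (fun i => psi (b i)) (psi z).
Proof.
move=> [hz [xi [hxi hc]]]; split; first exact: hom_closed.
exists (fun i => psi (xi i)); split; last by rewrite -hom_massey_value; exact: hom_cohom.
move=> i; split; first exact/(hom_homog hpsi)/(hxi i).1.
by rewrite -(hom_dd hpsi) (hxi i).2 (hom_mul hpsi).
Qed.

End Morphism.

Section QuasiIsomorphism.
Variables (B A : dga) (psi : B -> A).
Hypothesis Hpsi : quasi_iso psi.
Let hpsi := Hpsi.1.
Let psi_inj n := (Hpsi.2 n).1.
Let psi_surj n := (Hpsi.2 n).2.

Lemma massey_defined_transfer p n (q : 'I_n -> int) a b (a' : B) (b' : 'I_n -> B) :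
  massey_defined p q a b -> closed_in p a' -> (forall i, closed_in (q i) (b' i)) ->
  cohom p (psi a') a -> (forall i, cohom (q i) (psi (b' i)) (b i)) ->
  massey_defined p q a' b'.
Proof.
move=> [hp [ha [hb hab]]] ha' hb' hca hcb; split=> //; split=> //; split=> // i.
apply: psi_inj; first exact: closed_mul.
rewrite (hom_mul hpsi) -[_ * _](subrK (a * b i)); apply: exactD (hab i).
exact: cohom_mul hp ha (hom_closed hpsi (hb' i)) hca (hcb i).
Qed.

(* [x - psi x0] is a cocycle, so it is cohomologous to the image of a cocycle [c];
   then [x0 + c] is the required primitive. *)
Lemma lift_primitive m (y : B) (x : A) : exact_in m y ->
  homog (m - 1) x -> dd x = psi y ->
  exists x' : B, (homog (m - 1) x' /\ dd x' = y) /\ cohom (m - 1) (psi x') x.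
Proof.
move=> [_ [x0 [hx0 dx0]]] hx dx.
have [|c [[hc dc] hcx]] := @psi_surj (m - 1) (x - psi x0).
  split; first by apply: homogB hx _; exact: (hom_homog hpsi).
  by rewrite ddB dx -(hom_dd hpsi) dx0 subrr.
exists (x0 + c); split; first by split; [exact: homogD | rewrite ddD dx0 dc addr0].
by move: hcx; rewrite /cohom opprB addrA (linD (hom_linear hpsi)) [psi x0 + _]addrC.
Qed.

Lemma massey_elem_lift p n (q : 'I_n -> int) (a' : B) (b' : 'I_n -> B) z :
  massey_defined p q a' b' ->
  massey_elem p q (psi a') (fun i => psi (b' i)) z ->
  exists z', massey_elem p q a' b' z' /\ cohom (massey_deg p q) (psi z') z.
Proof.
move=> [hp [ha' [hb' hab]]] [hz [xi [hxi hc]]].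
have /fin_all_exists [xi' hxi'] i : exists x', (homog (p + q i - 1) x' /\
    dd x' = a' * b' i) /\ cohom (p + q i - 1) (psi x') (xi i).
  by apply: lift_primitive (hab i) (hxi i).1 _; rewrite (hxi i).2 (hom_mul hpsi).
have /fin_all_exists [eta heta] i : exists eta, homog (p + q i - 1 - 1) eta /\
    dd eta = psi (xi' i) - xi i.
  by case: (hxi' i) => _ [].
exists (massey_value p q b' xi'); split.
  split; first exact: massey_value_closed hp ha' hb' (fun i => (hxi' i).1).
  by exists xi'; split => [i|]; [exact: (hxi' i).1 | rewrite /cohom subrr; exact: exact0].
apply: cohom_trans (cohom_sym hc); rewrite (hom_massey_value hpsi).
rewrite (@eq_massey_value _ _ _ _ _ _ (fun i => xi i + dd (eta i))).
  exact: massey_value_perturb hp (hom_closed hpsi ha') (fun i => hom_closed hpsi (hb' i))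
    hxi _ (fun i => (heta i).1).
by move=> i; rewrite (heta i).2 addrC subrK.
Qed.

End QuasiIsomorphism.

Theorem lemma2p9 (B A : dga) (psi : B -> A) (Hpsi : quasi_iso psi) :
  (forall (p : int) (n : nat) (q : 'I_n -> int)
          (a : A) (b : 'I_n -> A) (a' : B) (b' : 'I_n -> B),
      massey_defined p q a b ->
      closed_in p a' -> (forall i, closed_in (q i) (b' i)) ->
      cohom p (psi a') a -> (forall i, cohom (q i) (psi (b' i)) (b i)) ->
      massey_defined p q a' b' /\
      cohom_image_eq psi (massey_deg p q)
        (massey_elem p q a' b') (massey_elem p q a b)) /\
  (forall (p : int) (n : nat) (q : 'I_n -> int) (a' : B) (b' : 'I_n -> B),
      massey_defined p q a' b' ->
      cohom_image_eq psi (massey_deg p q)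
        (massey_elem p q a' b') (massey_elem p q (psi a') (fun i => psi (b' i)))).
Proof.
have hpsi := Hpsi.1.
split=> [p n q a b a' b' hdef ha' hb' hca hcb | p n q a' b' hdef'].
  have hdef' := massey_defined_transfer Hpsi hdef ha' hb' hca hcb.
  have [hp [ha [hb _]]] := hdef.
  split => //; split=> [z' /(massey_elem_hom hpsi) | z hz].
    apply: massey_elem_cohom hp (hom_closed hpsi ha') (cohom_sym hca) _ _.
    - by move=> i; exact: hom_closed.
    - by move=> i; exact: cohom_sym.
  apply: (massey_elem_lift Hpsi hdef').
  exact: (massey_elem_cohom (b' := fun i => psi (b' i))) hp ha hca hb hcb hz.
split=> [z' | z hz]; [exact: massey_elem_hom | exact: (massey_elem_lift Hpsi hdef' hz)].
Qed.
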